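(* Let $U,V\in\mathbb{R}^{3\times3}$ be symmetric positive-definite matrices with $U\neq V$ and $UV=VU$, and suppose the eigenvalues $\lambda_1,\lambda_2,\lambda_3$ of $U$ are pairwise distinct. Suppose there is a unit vector $\hat e\in\mathbb{R}^3$ such that $V=(-I+2\,\hat e\otimes\hat e)\,U\,(-I+2\,\hat e\otimes\hat e)$. Then $\hat e$ is perpendicular to an eigenvector of $U$. Consequently $U$ and $V$ form compound domains: there is a unit vector $\hat e'$ with $\hat e'\perp\hat e$ such that $V=(-I+2\,\hat e'\otimes\hat e')\,U\,(-I+2\,\hat e'\otimes\hat e')$ as well.
   Context: $-I+2\hat e\otimes\hat e$ is the rotation by $180^\circ$ about the unit vector $\hat e$. Two distinct symmetric positive-definite matrices $U,V$ are said to form compound domains if there exist two non-parallel unit vectors $\hat e_1,\hat e_2$ with $V=(-I+2\hat e_i\otimes\hat e_i)U(-I+2\hat e_i\otimes\hat e_i)$ for $i=1,2$. A known result used in this setting: if $V=(-I+2\hat e_1\otimes\hat e_1)U(-I+2\hat e_1\otimes\hat e_1)\neq U$, then a second such axis $\hat e_2\nparallel\hat e_1$ exists if and only if $\hat e_1$ is perpendicular to an eigenvector of $U$, in which case $\hat e_1,\hat e_2$ and that eigenvector form an orthonormal basis. *)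

From mathcomp Require Import all_boot all_order all_algebra.
Set Implicit Arguments. Unset Strict Implicit. Unset Printing Implicit Defensive.
Import Order.TTheory GRing.Theory Num.Theory.
Local Open Scope ring_scope.

Definition dotv (R : rcfType) (n : nat) (u v : 'cV[R]_n) : R :=
  \sum_(i < n) u i 0 * v i 0.

Definition unit_vec (R : rcfType) (n : nat) (e : 'cV[R]_n) : Prop :=
  dotv e e = 1.

Definition spd (R : rcfType) (n : nat) (A : 'M[R]_n) : Prop :=
  A^T = A /\ forall x : 'cV[R]_n, x != 0 -> 0 < (x^T *m A *m x) 0 0.

(* -I + 2 e (x) e : rotation by 180 degrees about e (e a unit vector). *)
Definition rot180 (R : rcfType) (n : nat) (e : 'cV[R]_n) : 'M[R]_n :=
  - 1%:M + 2%:R *: (e *m e^T).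

Definition eigenvector (R : rcfType) (n : nat) (A : 'M[R]_n) (v : 'cV[R]_n) : Prop :=
  v != 0 /\ exists lam : R, A *m v = lam *: v.

From mathcomp Require Import all_boot all_order all_algebra ring.
Import Order.TTheory GRing.Theory Num.Theory.
Set Implicit Arguments. Unset Strict Implicit. Unset Printing Implicit Defensive.
Local Open Scope ring_scope.

(* Write U e = a e + f with f orthogonal to e. Expanding the conjugation by the
   half-turn gives V = U - 2 (e f^T + f e^T), so f <> 0 and U commutes with
   e f^T + f e^T; applying both sides to e yields U f = a f + |f|^2 e. Thus the
   symmetric U preserves the plane of e and f, so e x f is an eigenvector, and the
   half-turn about e' = f / |f|, for which U e' = a e' + |f| e, produces the same
   conjugate V. *)

Section DotProduct.
Variables (R : rcfType) (n : nat).
Implicit Types (u v w : 'cV[R]_n) (A : 'M[R]_n).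

Lemma dotvC u v : dotv u v = dotv v u.
Proof. by apply: eq_bigr => i _; rewrite mulrC. Qed.

Lemma dotvDr u v w : dotv u (v + w) = dotv u v + dotv u w.
Proof. by rewrite /dotv -big_split; apply: eq_bigr => i _; rewrite mxE mulrDr. Qed.

Lemma dotvZr u v a : dotv u (a *: v) = a * dotv u v.
Proof. by rewrite /dotv mulr_sumr; apply: eq_bigr => i _; rewrite mxE mulrCA. Qed.

Lemma dotvZl u v a : dotv (a *: u) v = a * dotv u v.
Proof. by rewrite dotvC dotvZr dotvC. Qed.

Lemma dotv0l v : dotv 0 v = 0.
Proof. by rewrite /dotv big1 // => i _; rewrite mxE mul0r. Qed.

Lemma mulmx_tr_dotv u v : u^T *m v = (dotv u v)%:M.
Proof.
apply/matrixP => i j; rewrite (ord1 i) (ord1 j) !mxE mulr1n.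
by apply: eq_bigr => k _; rewrite mxE.
Qed.

Lemma dotv_mulmxl A u v : dotv (A *m u) v = dotv u (A^T *m v).
Proof.
have dotvE w w' : dotv w w' = (w^T *m w') 0 0 by rewrite mulmx_tr_dotv mxE mulr1n.
by rewrite !dotvE trmx_mul mulmxA.
Qed.

Lemma dotv_gt0 v : v != 0 -> 0 < dotv v v.
Proof.
have sq_ge0 i : 0 <= v i 0 * v i 0 by rewrite -expr2 sqr_ge0.
move=> v_neq0; rewrite lt_def sumr_ge0 ?andbT //.
apply: contra v_neq0 => /eqP/psumr_eq0P v2_eq0; apply/eqP/matrixP => i j.
by rewrite (ord1 j) mxE; apply/eqP; rewrite -sqrf_eq0 expr2 v2_eq0.
Qed.

Lemma unit_vec_neq0 v : unit_vec v -> v != 0.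
Proof.
move=> v_unit; apply/eqP => v0; move: v_unit.
by rewrite /unit_vec v0 dotv0l => /eqP; rewrite eq_sym oner_eq0.
Qed.

Lemma mulmx_outer u v w : u *m v^T *m w = dotv v w *: u.
Proof. by rewrite -mulmxA mulmx_tr_dotv mul_mx_scalar. Qed.

Definition sym_outer u v : 'M[R]_n := u *m v^T + v *m u^T.

End DotProduct.

Section HalfTurnConjugation.
Variables (R : rcfType) (n : nat) (U : 'M[R]_n).
Hypothesis U_sym : U^T = U.

Lemma rot180_conj_sym_outer (e f : 'cV[R]_n) (a : R) :
  unit_vec e -> dotv e f = 0 -> U *m e = a *: e + f ->
  rot180 e *m U *m rot180 e = U - 2%:R *: sym_outer e f.
Proof.
move=> e_unit ef0 Ue.
have eU : e^T *m U = a *: e^T + f^T by rewrite -U_sym -trmx_mul Ue linearD linearZ.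
have PU : e *m e^T *m U = a *: (e *m e^T) + e *m f^T.
  by rewrite -mulmxA eU mulmxDr -scalemxAr.
have UP : U *m (e *m e^T) = a *: (e *m e^T) + f *m e^T.
  by rewrite mulmxA Ue mulmxDl -scalemxAl.
have PUP : e *m e^T *m U *m (e *m e^T) = a *: (e *m e^T).
  rewrite PU mulmxDl -scalemxAl !mulmxA !mulmx_outer.
  by rewrite (dotvC f) ef0 e_unit scale1r scale0r mul0mx addr0.
rewrite /rot180 /sym_outer !mulmxDl !mulmxDr !mulNmx !mulmxN !mul1mx !mulmx1 opprK.
rewrite -!scalemxAl -!scalemxAr !scalerA PUP PU UP.
move: (e *m e^T) (e *m f^T) (f *m e^T) => P A B.
by apply/matrixP => i j; rewrite !mxE; ring.
Qed.

Lemma commute_sym_outer_mulmx (e f : 'cV[R]_n) (a : R) :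
  unit_vec e -> dotv e f = 0 -> U *m e = a *: e + f ->
  U *m sym_outer e f = sym_outer e f *m U ->
  U *m f = a *: f + dotv f f *: e.
Proof.
move=> e_unit ef0 Ue /(congr1 (mulmx^~ e)).
rewrite -!mulmxA Ue /sym_outer !mulmxDl !mulmx_outer.
rewrite (dotvC f) ef0 e_unit scale0r add0r scale1r => ->.
by rewrite !dotvDr !dotvZr (dotvC f e) ef0 e_unit mulr0 add0r mulr1 addr0 addrC.
Qed.

Lemma exists_orthogonal_rot180_conj (e f : 'cV[R]_n) (a : R) :
  unit_vec e -> dotv e f = 0 -> f != 0 ->
  U *m e = a *: e + f -> U *m f = a *: f + dotv f f *: e ->
  exists e' : 'cV[R]_n,
    [/\ unit_vec e', dotv e' e = 0 &
        rot180 e' *m U *m rot180 e' = U - 2%:R *: sym_outer e f].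
Proof.
move=> e_unit ef0 f_neq0 Ue Uf.
have ff_gt0 := dotv_gt0 f_neq0.
set s := Num.sqrt (dotv f f).
have s2 : s ^+ 2 = dotv f f by rewrite sqr_sqrtr // ltW.
have s_neq0 : s != 0 by rewrite sqrtr_eq0 -ltNge.
exists (s^-1 *: f).
have e'_unit : unit_vec (s^-1 *: f).
  by rewrite /unit_vec dotvZl dotvZr -s2; field.
have e'e0 : dotv (s^-1 *: f) e = 0 by rewrite dotvZl dotvC ef0 mulr0.
split=> //.
have Ue' : U *m (s^-1 *: f) = a *: (s^-1 *: f) + s *: e.
  by rewrite -scalemxAr Uf scalerDr !scalerA -s2 mulrC; congr (_ + _ *: _); field.
rewrite (rot180_conj_sym_outer e'_unit _ Ue'); last by rewrite dotvZr e'e0 mulr0.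
congr (_ - _ *: _); rewrite /sym_outer !linearZ /=.
by rewrite -!scalemxAl !scalerA mulfV ?mulVf // !scale1r addrC.
Qed.

End HalfTurnConjugation.

Section CrossProduct.
Variable R : rcfType.
Implicit Types (u v w x : 'cV[R]_3).

Definition cross u w : 'cV[R]_3 :=
  \col_i (if i == 0 :> 'I_3 then u 1 0 * w 2 0 - u 2 0 * w 1 0
          else if i == 1 :> 'I_3 then u 2 0 * w 0 0 - u 0 0 * w 2 0
          else u 0 0 * w 1 0 - u 1 0 * w 0 0).

Lemma dotv3 u v : dotv u v = u 0 0 * v 0 0 + u 1 0 * v 1 0 + u 2 0 * v 2 0.
Proof.
rewrite /dotv !big_ord_recl big_ord0 addr0 addrA.
have -> : lift ord0 (lift ord0 ord0) = 2 :> 'I_3 by apply/val_inj.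
have -> : lift ord0 ord0 = 1 :> 'I_3 by apply/val_inj.
by have -> : ord0 = 0 :> 'I_3 by apply/val_inj.
Qed.

Lemma colv3P u v : u 0 0 = v 0 0 -> u 1 0 = v 1 0 -> u 2 0 = v 2 0 -> u = v.
Proof.
move=> eq0 eq1 eq2; apply/matrixP => i j; rewrite (ord1 j).
have : i = 0 \/ i = 1 \/ i = 2.
  by case: i => [[|[|[|//]]] ?]; [left | right; left | right; right]; apply/val_inj.
by case=> [->|[->|->]].
Qed.

Lemma dotv_crossl u w : dotv u (cross u w) = 0.
Proof. rewrite dotv3 !mxE /=; ring. Qed.

Lemma dotv_crossr u w : dotv w (cross u w) = 0.
Proof. rewrite dotv3 !mxE /=; ring. Qed.

Lemma dotv_cross_cross u w :
  dotv (cross u w) (cross u w) = dotv u u * dotv w w - dotv u w ^+ 2.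
Proof. rewrite !dotv3 !mxE /=; ring. Qed.

Lemma cross_neq0 u w : u != 0 -> w != 0 -> dotv u w = 0 -> cross u w != 0.
Proof.
move=> u_neq0 w_neq0 uw0; apply/eqP => uw_cross0.
have := dotv_cross_cross u w; rewrite uw_cross0 dotv0l uw0 expr0n subr0 => /esym/eqP.
by rewrite mulf_eq0 !gt_eqF ?dotv_gt0.
Qed.

Lemma orthogonal_cross_parallel u w x :
  dotv x u = 0 -> dotv x w = 0 ->
  dotv (cross u w) (cross u w) *: x = dotv (cross u w) x *: cross u w.
Proof.
move=> xu0 xw0; apply/eqP; rewrite -subr_eq0; apply/eqP.
have -> : dotv (cross u w) (cross u w) *: x - dotv (cross u w) x *: cross u w =
          dotv x w *: cross (cross u w) u - dotv x u *: cross (cross u w) w.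
  by apply: colv3P; rewrite !mxE !dotv3 !mxE /=; ring.
by rewrite xu0 xw0 !scale0r subr0.
Qed.

Lemma cross_eigenvector (U : 'M[R]_3) u w (a b c d : R) :
  U^T = U -> cross u w != 0 ->
  U *m u = a *: u + b *: w -> U *m w = c *: u + d *: w ->
  eigenvector U (cross u w).
Proof.
move=> U_sym uw_neq0 Uu Uw; split=> //.
have [cu0 cw0] : dotv (cross u w) u = 0 /\ dotv (cross u w) w = 0.
  by rewrite !(dotvC (cross u w)) dotv_crossl dotv_crossr.
have Uc_u0 : dotv (U *m cross u w) u = 0.
  by rewrite dotv_mulmxl U_sym Uu dotvDr !dotvZr cu0 cw0 !mulr0 addr0.
have Uc_w0 : dotv (U *m cross u w) w = 0.
  by rewrite dotv_mulmxl U_sym Uw dotvDr !dotvZr cu0 cw0 !mulr0 addr0.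
have cc_neq0 : dotv (cross u w) (cross u w) != 0 by rewrite gt_eqF ?dotv_gt0.
exists (dotv (cross u w) (U *m cross u w) / dotv (cross u w) (cross u w)).
apply: (scalerI cc_neq0); rewrite orthogonal_cross_parallel // scalerA.
by rewrite mulrCA mulfV ?mulr1.
Qed.

End CrossProduct.

Theorem mainTheorem1 (R : rcfType) (U V : 'M[R]_3) (e : 'cV[R]_3) :
  spd U -> spd V -> U != V -> U *m V = V *m U ->
  (exists l1 l2 l3 : R,
      [/\ l1 != l2, l1 != l3, l2 != l3 &
          char_poly U = ('X - l1%:P) * ('X - l2%:P) * ('X - l3%:P)]) ->
  unit_vec e ->
  V = rot180 e *m U *m rot180 e ->
  (exists v : 'cV[R]_3, eigenvector U v /\ dotv e v = 0) /\
  (exists e' : 'cV[R]_3,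
      [/\ unit_vec e', dotv e' e = 0 & V = rot180 e' *m U *m rot180 e']).
Proof.
move=> [U_sym _] _ U_neq_V UV_comm _ e_unit V_def; subst V.
set a := dotv e (U *m e); set f := U *m e - a *: e.
have Ue : U *m e = a *: e + f by rewrite addrC subrK.
have ef0 : dotv e f = 0 by rewrite dotvDr -scaleNr dotvZr e_unit mulr1 addrN.
rewrite (rot180_conj_sym_outer U_sym e_unit ef0 Ue) in U_neq_V UV_comm *.
have f_neq0 : f != 0.
  apply: contra U_neq_V => /eqP f0.
  by rewrite /sym_outer f0 trmx0 mulmx0 mul0mx addr0 scaler0 subr0.
have UM : U *m sym_outer e f = sym_outer e f *m U.
  move: UV_comm; rewrite mulmxBr mulmxBl -scalemxAr -scalemxAl.
  by move/addrI/oppr_inj/scalerI; apply; rewrite pnatr_eq0.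
have Uf := commute_sym_outer_mulmx e_unit ef0 Ue UM.
split.
  exists (cross e f); split; last exact: dotv_crossl.
  apply: (cross_eigenvector (b := 1) (c := dotv f f) U_sym (cross_neq0 (unit_vec_neq0 e_unit) f_neq0 ef0)).
  - by rewrite Ue scale1r.
  - by rewrite Uf addrC.
have [e' [e'_unit e'e0 conj_e']] := exists_orthogonal_rot180_conj U_sym e_unit ef0 f_neq0 Ue Uf.
by exists e'; split; rewrite // conj_e'.
Qed.
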